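(* Let $(X,d)$ be a compact metric space and let $f\colon X\to X$ be a continuous map with the limit shadowing property. Then for every $x\in\Omega(f)$ and every $\epsilon>0$ there exists $y\in\Omega(f)$ with $d(x,y)<\epsilon$ such that either $y$ is a periodic point of $f$, or $f|_{\overline{O_f(y)}}\colon\overline{O_f(y)}\to\overline{O_f(y)}$ is topologically conjugate to an odometer, where $O_f(y)=\{f^n(y):n\ge0\}$.
   Context: $f$ has the limit shadowing property if for every sequence $(x_i)_{i\ge0}$ in $X$ with $\lim_{i\to\infty}d(f(x_i),x_{i+1})=0$ there is $y\in X$ with $\lim_{i\to\infty}d(x_i,f^i(y))=0$. $\Omega(f)$ is the set of non-wandering points: $x$ such that for every neighborhood $U$ of $x$ there is $n>0$ with $f^n(U)\cap U\ne\emptyset$. An odometer: given a strictly increasing sequence $m=(m_k)_{k\ge1}$ of positive integers with $m_1\ge2$ and $m_k\mid m_{k+1}$ for all $k$, let $X_m=\{(x_k)_{k\ge1}\in\prod_{k\ge1}\{0,\dots,m_k-1\}: x_k\equiv x_{k+1}\pmod{m_k}\ \forall k\}$ with the product topology (discrete factors), and $g\colon X_m\to X_m$, $g(x)_k=x_k+1\pmod{m_k}$. *)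

From Stdlib Require Import Reals List Arith.
Open Scope R_scope.

Definition is_metric {X : Type} (d : X -> X -> R) : Prop :=
  (forall x y, 0 <= d x y) /\
  (forall x y, d x y = 0 <-> x = y) /\
  (forall x y, d x y = d y x) /\
  (forall x y z, d x z <= d x y + d y z).

Definition is_open {X : Type} (d : X -> X -> R) (U : X -> Prop) : Prop :=
  forall x, U x -> exists r, r > 0 /\ forall y, d x y < r -> U y.

Definition metric_compact {X : Type} (d : X -> X -> R) : Prop :=
  forall (I : Type) (U : I -> X -> Prop),
    (forall i, is_open d (U i)) ->
    (forall x, exists i, U i x) ->
    exists l : list I, forall x, exists i, In i l /\ U i x.

Definition metric_continuous {X : Type} (d : X -> X -> R) (f : X -> X) : Prop :=
  forall x eps, eps > 0 -> exists delta, delta > 0 /\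
    forall y, d x y < delta -> d (f x) (f y) < eps.

Definition iter {X : Type} (f : X -> X) (n : nat) (x : X) : X := Nat.iter n f x.

Definition limit_shadowing {X : Type} (d : X -> X -> R) (f : X -> X) : Prop :=
  forall xs : nat -> X,
    Un_cv (fun i => d (f (xs i)) (xs (S i))) 0 ->
    exists y, Un_cv (fun i => d (xs i) (iter f i y)) 0.

Definition nonwandering {X : Type} (d : X -> X -> R) (f : X -> X) (x : X) : Prop :=
  forall U : X -> Prop, is_open d U -> U x ->
    exists n, (n > 0)%nat /\ exists z, U z /\ U (iter f n z).

Definition periodic {X : Type} (f : X -> X) (y : X) : Prop :=
  exists n, (n > 0)%nat /\ iter f n y = y.

Definition orbit_closure {X : Type} (d : X -> X -> R) (f : X -> X) (y z : X) : Prop :=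
  forall eps, eps > 0 -> exists n, d z (iter f n y) < eps.

(* Odometers. The sequence (m_k)_{k>=1} is indexed from 0 here: m 0 = m_1. *)
Definition odometer_seq (m : nat -> nat) : Prop :=
  (2 <= m 0)%nat /\ forall k, (m k < m (S k))%nat /\ Nat.divide (m k) (m (S k)).

Definition in_odometer (m : nat -> nat) (x : nat -> nat) : Prop :=
  forall k, (x k < m k)%nat /\ Nat.modulo (x (S k)) (m k) = x k.

Definition odometer_map (m : nat -> nat) (x : nat -> nat) : nat -> nat :=
  fun k => Nat.modulo (x k + 1) (m k).

(* f restricted to K = closure(O_f(y)) is topologically conjugate to the odometer
   (X_m, g): there is a homeomorphism h : K -> X_m (X_m with the product of
   discrete topologies, whose basic neighbourhoods of p are the cylinders
   {q | q_k = p_k for k < N}) with h o f = g o h on K.  Points of X_m are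
   compared pointwise (extensional equality of sequences). *)
Definition conj_to_odometer {X : Type} (d : X -> X -> R) (f : X -> X) (y : X)
    (m : nat -> nat) : Prop :=
  let K := orbit_closure d f y in
  exists h : X -> (nat -> nat),
    (forall z, K z -> in_odometer m (h z)) /\
    (forall p, in_odometer m p -> exists z, K z /\ forall k, h z k = p k) /\
    (forall z w, K z -> K w -> (forall k, h z k = h w k) -> z = w) /\
    (* h continuous on K *)
    (forall z N, K z -> exists delta, delta > 0 /\
       forall w, K w -> d z w < delta -> forall k, (k < N)%nat -> h w k = h z k) /\
    (* h^{-1} continuous on X_m *)
    (forall z eps, K z -> eps > 0 -> exists N,
       forall w, K w -> (forall k, (k < N)%nat -> h w k = h z k) -> d z w < eps) /\
    (forall z, K z -> forall k, h (f z) k = odometer_map m (h z) k).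

From Stdlib Require Import Reals List Arith Lia Lra Classical ClassicalEpsilon Wf_nat.
Open Scope R_scope.

(* Limit shadowing gives, for every point [b] and radius [g > 0], an [e > 0] such that every
   [e]-pseudo-cycle through [b] is [g]-traced by a true orbit: otherwise the concatenation of
   untraced pseudo-cycles with errors tending to 0 would be an asymptotic pseudo-orbit that is
   not limit-shadowed.  Starting from a pseudo-cycle through the nonwandering point [x], trace
   the current periodic pseudo-orbit of period [p], pick among the tracing points one that is
   recurrent for [f^p] (Birkhoff), and close up a piece of its orbit into a periodic
   pseudo-orbit with period a multiple of [p], at half the radius.  These pseudo-orbits converge
   to the orbit of a point [y] that is regularly recurrent: along a chain of periods
   [p_k | p_(k+1)], the points [f^i y] and [f^j y] are close when [i = j mod p_k].
   For such [y] the closures of the residue classes [{f^i y | i = r mod p_k}] are equal or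
   disjoint, and equal exactly when [r = s mod D_k], with [D_k | D_(k+1)].  If the [D_k] are
   bounded, [y] is periodic; otherwise the residues modulo an increasing subsequence of the
   [D_k] conjugate the orbit closure of [y] to an odometer. *)

Lemma mod_mod_divide (a b c : nat) : Nat.divide c b -> ((a mod b) mod c = a mod c)%nat.
Proof.
  intros [t ->].
  rewrite (Nat.div_mod_eq a (t * c)) at 2.
  replace (t * c * (a / (t * c)) + a mod (t * c))%nat
    with (a mod (t * c) + t * (a / (t * c)) * c)%nat by ring.
  now rewrite Nat.Div0.mod_add.
Qed.

Lemma divide_sub_iff_mod_eq (n r s : nat) : (1 <= n)%nat -> (r <= s)%nat ->
  Nat.divide n (s - r) <-> (r mod n = s mod n)%nat.
Proof.
  intros hn hrs. split.
  - intros [q hq]. replace s with (r + q * n)%nat by lia.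
    now rewrite Nat.Div0.mod_add.
  - intros H. pose proof (Nat.div_mod_eq r n). pose proof (Nat.div_mod_eq s n).
    exists (s / n - r / n)%nat. rewrite Nat.mul_sub_distr_r, !(Nat.mul_comm _ n). lia.
Qed.

Lemma succ_mod (i n : nat) : (1 <= n)%nat ->
  (S i mod n = if S (i mod n) =? n then 0 else S (i mod n))%nat.
Proof.
  intros hn. rewrite (Nat.div_mod_eq i n) at 1.
  replace (S (n * (i / n) + i mod n)) with (S (i mod n) + (i / n) * n)%nat by ring.
  rewrite Nat.Div0.mod_add. destruct (S (i mod n) =? n)%nat eqn:E.
  - apply Nat.eqb_eq in E. rewrite E. apply Nat.Div0.mod_same.
  - apply Nat.eqb_neq in E. apply Nat.mod_small. pose proof (Nat.mod_upper_bound i n). lia.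
Qed.

Lemma divide_fact (a B : nat) : (1 <= a <= B)%nat -> Nat.divide a (fact B).
Proof.
  induction B as [|B IH]; intros ha; [lia|].
  change (fact (S B)) with (S B * fact B)%nat.
  destruct (Nat.eq_dec a (S B)) as [->|hne].
  - apply Nat.divide_factor_l.
  - apply Nat.divide_mul_r, IH. lia.
Qed.

Lemma additive_set_multiples (G : nat -> Prop) :
  (forall t u, G t -> G u -> G (t + u)%nat) ->
  (forall t u, G t -> G (t + u)%nat -> G u) ->
  (exists t, (1 <= t)%nat /\ G t) ->
  exists D, (1 <= D)%nat /\ forall t, G t <-> Nat.divide D t.
Proof.
  intros Hadd Hsub Hpos.
  destruct (dec_inh_nat_subset_has_unique_least_element (fun t => (1 <= t)%nat /\ G t))
    as [D [[[hD GD] Dmin] _]]; [intro; apply classic | exact Hpos |].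
  assert (G0 : G 0%nat) by (apply (Hsub D); rewrite ?Nat.add_0_r; exact GD).
  assert (Gmul : forall q, G (q * D)%nat).
  { induction q as [|q IH]; [exact G0|]. replace (S q * D)%nat with (D + q * D)%nat by ring.
    now apply Hadd. }
  exists D. split; [exact hD|]. intro t. split.
  - intros Gt. apply Nat.Lcm0.mod_divide.
    assert (Gr : G (t mod D)%nat).
    { apply (Hsub (D * (t / D))%nat); [rewrite Nat.mul_comm; apply Gmul|].
      now rewrite <- Nat.div_mod_eq. }
    destruct (Nat.eq_dec (t mod D) 0) as [h|h]; [exact h|].
    assert (hr : (1 <= t mod D)%nat) by lia.
    pose proof (Dmin _ (conj hr Gr)). pose proof (Nat.mod_upper_bound t D). lia.
  - intros [q ->]. apply Gmul.
Qed.

Lemma unbounded_monotone_subseq (D : nat -> nat) :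
  (forall k m, (k <= m)%nat -> (D k <= D m)%nat) -> (forall B, exists k, (B < D k)%nat) ->
  exists kk : nat -> nat, (1 < D (kk 0%nat))%nat /\
    forall j, (kk j < kk (S j))%nat /\ (D (kk j) < D (kk (S j)))%nat.
Proof.
  intros Hmono Hunb. destruct (choice _ Hunb) as [above Habove].
  exists (fun j => Nat.iter j (fun k => above (D k)) (above 1%nat)).
  split; [apply Habove|]. intro j. cbn [Nat.iter].
  set (k := Nat.iter j _ _). pose proof (Habove (D k)) as Hk. split; [|exact Hk].
  destruct (Nat.lt_ge_cases k (above (D k))) as [h|h]; [exact h|].
  pose proof (Hmono _ _ h). lia.
Qed.

Lemma divide_chain_le (m : nat -> nat) : (forall k, Nat.divide (m k) (m (S k))) ->
  forall j l, (j <= l)%nat -> Nat.divide (m j) (m l).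
Proof.
  intros Hdiv j l. induction 1 as [|l _ IH]; [apply Nat.divide_refl|].
  eapply Nat.divide_trans; [exact IH | apply Hdiv].
Qed.

Lemma in_odometer_mod (m x : nat -> nat) :
  (forall k, Nat.divide (m k) (m (S k))) -> in_odometer m x ->
  forall j l, (j <= l)%nat -> (x l mod m j = x j)%nat.
Proof.
  intros Hdiv Hx j l hjl. induction hjl as [|l hjl IH].
  - apply Nat.mod_small, Hx.
  - rewrite <- (mod_mod_divide _ _ _ (divide_chain_le m Hdiv j l hjl)), (proj2 (Hx l)).
    exact IH.
Qed.

Lemma list_nat_bound (A : Type) (g : A -> nat) (l : list A) :
  exists M, forall a, In a l -> (g a <= M)%nat.
Proof.
  induction l as [|a l [M HM]]; [exists 0%nat; intros a []|].
  exists (Nat.max (g a) M). intros b [<-|hb]; [lia|]. specialize (HM b hb). lia.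
Qed.

Lemma uniform_radius (A : nat -> R -> Prop) (n : nat) :
  (forall r t t', 0 < t' <= t -> A r t -> A r t') ->
  (forall r, (r < n)%nat -> exists t, t > 0 /\ A r t) ->
  exists t, t > 0 /\ forall r, (r < n)%nat -> A r t.
Proof.
  intros Hmono. induction n as [|n IH]; intros H.
  - exists 1. split; [lra | intros r hr; lia].
  - destruct IH as [t1 [ht1 H1]]; [intros r hr; apply H; lia|].
    destruct (H n (Nat.lt_succ_diag_r n)) as [t2 [ht2 H2]].
    exists (Rmin t1 t2). split; [now apply Rmin_glb_lt|].
    intros r hr. destruct (Nat.eq_dec r n) as [->|hne].
    + apply Hmono with t2; [split; [now apply Rmin_glb_lt | apply Rmin_r]|exact H2].
    + apply Hmono with t1; [split; [now apply Rmin_glb_lt | apply Rmin_l]|]. apply H1. lia.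
Qed.

Lemma inv_INR_succ_lt (e : R) : e > 0 -> exists N, / (INR N + 1) < e.
Proof.
  intros he. destruct (archimed_cor1 e he) as [N [h1 h2]]. exists N.
  apply Rle_lt_trans with (/ INR N); [|exact h1].
  apply Rlt_le, Rinv_lt_contravar; [|lra]. apply lt_0_INR in h2. nra.
Qed.

Section Iterates.
Context {A : Type} (g : A -> A).

Lemma iter_succ n x : iter g (S n) x = g (iter g n x).
Proof. reflexivity. Qed.

Lemma iter_add a b x : iter g (a + b) x = iter g a (iter g b x).
Proof. apply Nat.iter_add. Qed.

Lemma iter_succ_r n x : iter g (S n) x = iter g n (g x).
Proof. apply Nat.iter_succ_r. Qed.

Lemma iter_mul p j x : iter (iter g p) j x = iter g (j * p) x.
Proof.
  induction j as [|j IH]; [reflexivity|].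
  change (iter g p (iter (iter g p) j x) = iter g (p + j * p) x).
  now rewrite IH, iter_add.
Qed.

End Iterates.

Section Concatenation.
Context {A : Type} (L : nat -> nat) (C : nat -> nat -> A).
Hypothesis HL : forall n, (1 <= L n)%nat.

(* [block_pos t = (n, i)]: time [t] is offset [i] of the block [n] of length [L n]. *)
Fixpoint block_pos (t : nat) : nat * nat :=
  match t with
  | O => (O, O)
  | S t' => let (n, i) := block_pos t' in if S i <? L n then (n, S i) else (S n, O)
  end.

Definition concat (t : nat) : A := let (n, i) := block_pos t in C n i.

Lemma block_pos_lt t n i : block_pos t = (n, i) -> (i < L n)%nat.
Proof.
  revert n i. induction t as [|t IH]; intros n' i' Ht; simpl in Ht.
  - injection Ht as <- <-. apply HL.
  - destruct (block_pos t) as [n i]. specialize (IH n i eq_refl).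
    destruct (S i <? L n) eqn:E; injection Ht as <- <-.
    + now apply Nat.ltb_lt.
    + apply HL.
Qed.

Lemma block_pos_mono t t' : (t <= t')%nat -> (fst (block_pos t) <= fst (block_pos t'))%nat.
Proof.
  induction 1 as [|t' _ IH]; [lia|]. simpl. destruct (block_pos t') as [n i].
  destruct (S i <? L n); simpl in *; lia.
Qed.

Lemma block_pos_le t : (fst (block_pos t) <= t)%nat.
Proof.
  induction t as [|t IH]; [reflexivity|]. simpl. destruct (block_pos t) as [n i].
  destruct (S i <? L n); simpl in *; lia.
Qed.

Lemma block_pos_run t n : block_pos t = (n, O) ->
  forall i, (i < L n)%nat -> block_pos (i + t) = (n, i).
Proof.
  intros Ht i. induction i as [|i IH]; intros hi; [exact Ht|].
  simpl. rewrite IH by lia. now rewrite (proj2 (Nat.ltb_lt _ _) hi).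
Qed.

Lemma block_pos_next t n : block_pos t = (n, O) -> block_pos (L n + t) = (S n, O).
Proof.
  intros Ht. pose proof (HL n).
  replace (L n + t)%nat with (S (L n - 1 + t)) by lia. simpl.
  rewrite (block_pos_run t n Ht (L n - 1)) by lia.
  now rewrite (proj2 (Nat.ltb_ge _ _)) by lia.
Qed.

Lemma block_pos_start n : exists t, block_pos t = (n, O).
Proof.
  induction n as [|n [t Ht]]; [now exists O|].
  exists (L n + t)%nat. now apply block_pos_next.
Qed.

Hypothesis HC : forall n, C n (L n) = C (S n) O.

Lemma concat_succ t n i : block_pos t = (n, i) -> concat (S t) = C n (S i).
Proof.
  intros Ht. pose proof (block_pos_lt t n i Ht). unfold concat. simpl. rewrite Ht.
  destruct (S i <? L n) eqn:E; [reflexivity|].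
  apply Nat.ltb_ge in E. replace (S i) with (L n) by lia. now rewrite HC.
Qed.

Lemma concat_block t n : block_pos t = (n, O) ->
  forall i, (i <= L n)%nat -> concat (i + t) = C n i.
Proof.
  intros Ht i hi. unfold concat. destruct (Nat.lt_ge_cases i (L n)) as [h|h].
  - now rewrite (block_pos_run t n Ht i h).
  - replace i with (L n) by lia. now rewrite (block_pos_next t n Ht), HC.
Qed.

End Concatenation.

Section MetricDynamics.
Context {X : Type} (d : X -> X -> R).
Hypothesis Hd : is_metric d.

Lemma dist_ge0 x y : 0 <= d x y.
Proof. apply Hd. Qed.

Lemma dist_xx x : d x x = 0.
Proof. now apply Hd. Qed.

Lemma dist_sym x y : d x y = d y x.
Proof. apply Hd. Qed.

Lemma dist_tri x y z : d x z <= d x y + d y z.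
Proof. apply Hd. Qed.

Lemma eq_of_dist_lt x y : (forall e, e > 0 -> d x y < e) -> x = y.
Proof.
  intros H. apply Hd, Rle_antisym; [|apply dist_ge0].
  apply Rle_plus_epsilon. intros e he. specialize (H e he). lra.
Qed.

Lemma ball_open x r : is_open d (fun y => d x y < r).
Proof.
  intros y hy. exists (r - d x y). split; [lra|].
  intros z hz. pose proof (dist_tri x y z). lra.
Qed.

Definition closed_set (Z : X -> Prop) : Prop :=
  forall c, (forall e, e > 0 -> exists z, Z z /\ d c z < e) -> Z c.

Lemma closed_set_apart (Z : X -> Prop) z : closed_set Z -> ~ Z z ->
  exists t, t > 0 /\ forall u, Z u -> t <= d z u.
Proof.
  intros HZ hz. apply NNPP. intros Hno. apply hz, HZ. intros e he.
  apply NNPP. intros Hfar. apply Hno. exists e. split; [exact he|].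
  intros u hu. apply Rnot_lt_le. intros h. apply Hfar. now exists u.
Qed.

Definition cluster_point (s : nat -> X) (c : X) : Prop :=
  forall e, e > 0 -> forall N, exists n, (N <= n)%nat /\ d c (s n) < e.

Lemma cluster_point_closed (Z : X -> Prop) (s : nat -> X) c N :
  closed_set Z -> (forall n, (N <= n)%nat -> Z (s n)) -> cluster_point s c -> Z c.
Proof.
  intros HZ Hs Hc. apply HZ. intros e he. destruct (Hc e he N) as [n [hn h]].
  exists (s n). auto.
Qed.

Lemma continuous_iter (g : X -> X) : metric_continuous d g ->
  forall n, metric_continuous d (iter g n).
Proof.
  intros Hg n. induction n as [|n IH]; intros x e he.
  - exists e. auto.
  - destruct (Hg (iter g n x) e he) as [t1 [ht1 H1]].
    destruct (IH x t1 ht1) as [t2 [ht2 H2]].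
    exists t2. split; [exact ht2|]. intros y hy. apply H1, H2, hy.
Qed.

Hypothesis HX : metric_compact d.

(* Otherwise [X] is covered by open balls, each avoided by some tail of [s]; a finite
   subcover is then avoided by a single tail. *)
Lemma compact_cluster_point (s : nat -> X) : exists c, cluster_point s c.
Proof.
  apply NNPP. intros Hn.
  assert (H : forall c, exists e N, e > 0 /\ forall n, (N <= n)%nat -> e <= d c (s n)).
  { intros c. apply NNPP. intros H1. apply Hn. exists c. intros e he N.
    apply NNPP. intros H2. apply H1. exists e, N. split; [exact he|]. intros n hn.
    apply Rnot_lt_le. intros h3. apply H2. now exists n. }
  set (U := fun (i : X * R * nat) (y : X) => let '(c, e, N) := i in
              d c y < e /\ e > 0 /\ forall n, (N <= n)%nat -> e <= d c (s n)).
  destruct (HX _ U) as [l Hl].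
  - intros [[c e] N] y [h1 [h2 h3]]. exists (e - d c y). split; [lra|].
    intros z hz. simpl. repeat split; auto. pose proof (dist_tri c y z). lra.
  - intros y. destruct (H y) as [e [N [he HN]]]. exists (y, e, N). simpl.
    rewrite dist_xx. auto.
  - destruct (list_nat_bound _ (fun i : X * R * nat => let '(_, _, N) := i in N) l) as [M HM].
    destruct (Hl (s M)) as [[[c e] N] [hin [h1 [h2 h3]]]].
    specialize (HM _ hin). simpl in HM. specialize (h3 M HM). lra.
Qed.

Lemma compact_finite_net r : r > 0 -> exists l : list X, forall y, exists c, In c l /\ d c y < r.
Proof.
  intros hr. destruct (HX X (fun c y => d c y < r)) as [l Hl].
  - intros c. apply ball_open.
  - intros y. exists y. now rewrite dist_xx.
  - now exists l.
Qed.

Section Birkhoff.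
Variable g : X -> X.
Hypothesis Hg : metric_continuous d g.

Definition closed_invariant (M : X -> Prop) : Prop :=
  closed_set M /\ (exists z, M z) /\ forall z, M z -> M (g z).

Definition orbit_avoids (c : X) (r : R) (y : X) : Prop := forall j, r <= d c (iter g j y).

Lemma orbit_avoids_closed c r : closed_set (orbit_avoids c r).
Proof.
  intros y H j. apply Rnot_lt_le. intros hlt.
  destruct (continuous_iter g Hg j y (r - d c (iter g j y))) as [t [ht Ht]]; [lra|].
  destruct (H t ht) as [z [Hz hz]]. specialize (Ht _ hz). specialize (Hz j).
  pose proof (dist_tri c (iter g j y) (iter g j z)). lra.
Qed.

Lemma orbit_avoids_step c r y : orbit_avoids c r y -> orbit_avoids c r (g y).
Proof. intros H j. rewrite <- iter_succ_r. apply H. Qed.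

Definition avoid_refine (M : X -> Prop) (c : X) (r : R) (y : X) : Prop :=
  M y /\ ((exists u, M u /\ orbit_avoids c r u) -> orbit_avoids c r y).

Definition avoid_refine_all (r : R) (l : list X) (M : X -> Prop) : X -> Prop :=
  fold_left (fun M c => avoid_refine M c r) l M.

Lemma avoid_refine_invariant M c r :
  closed_invariant M -> closed_invariant (avoid_refine M c r).
Proof.
  intros [HC [HN HI]]. split; [|split].
  - intros y H. split.
    + apply HC. intros e he. destruct (H e he) as [z [[Hz _] hz]]. eauto.
    + intros HE. apply orbit_avoids_closed. intros e he.
      destruct (H e he) as [z [[_ Hz] hz]]. eauto.
  - destruct (classic (exists u, M u /\ orbit_avoids c r u)) as [[u [h1 h2]]|hn].
    + exists u. split; auto.
    + destruct HN as [z hz]. exists z. split; [exact hz|]. intros h; contradiction.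
  - intros z [h1 h2]. split; auto. intros HE. now apply orbit_avoids_step, h2.
Qed.

Lemma avoid_refine_all_spec r l M : closed_invariant M ->
  closed_invariant (avoid_refine_all r l M) /\
  (forall y, avoid_refine_all r l M y -> M y) /\
  (forall c, In c l -> (forall y, avoid_refine_all r l M y -> orbit_avoids c r y) \/
                      (forall y, avoid_refine_all r l M y -> ~ orbit_avoids c r y)).
Proof.
  revert M. induction l as [|c l IH]; intros M HM.
  - split; [exact HM|]. split; [auto|]. intros c [].
  - unfold avoid_refine_all. simpl. fold (avoid_refine_all r l (avoid_refine M c r)).
    destruct (IH (avoid_refine M c r) (avoid_refine_invariant M c r HM)) as [h1 [h2 h3]].
    split; [exact h1|]. split.
    + intros y hy. apply h2 in hy. apply hy.
    + intros c' [<-|hin]; [|auto].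
      destruct (classic (exists u, M u /\ orbit_avoids c r u)) as [HE|HE].
      * left. intros y hy. apply h2 in hy. now apply hy.
      * right. intros y hy hav. apply h2 in hy. apply HE. exists y. split; [apply hy|exact hav].
Qed.

(* For a finite [1/(m+1)]-net, shrink [Z] successively to the points whose [g]-orbits avoid
   the ball around each net point, whenever some point's orbit does.  A cluster point [v] of
   these nested sets lies in all of them; it is close to some net point [c], so not every
   orbit avoids [c], hence none does, and the orbit of [g v] comes back near [c], near [v]. *)
Lemma birkhoff_recurrence (Z : X -> Prop) : closed_invariant Z ->
  exists v, Z v /\ forall e, e > 0 -> exists j, (1 <= j)%nat /\ d (iter g j v) v < e.
Proof.
  intros HZ.
  assert (Hnet : forall m : nat,
             exists l : list X, forall y, exists c, In c l /\ d c y < / (INR m + 1)).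
  { intros m. apply compact_finite_net, Rinv_0_lt_compat. pose proof (pos_INR m). lra. }
  destruct (choice _ Hnet) as [net Hnetf].
  set (Ms := fix Ms m := match m with
                         | O => Z
                         | S m' => avoid_refine_all (/ (INR m' + 1)) (net m') (Ms m')
                         end).
  assert (HMs : forall m, closed_invariant (Ms m)).
  { induction m; simpl; [exact HZ|]. now apply avoid_refine_all_spec. }
  assert (Hdec : forall m k y, Ms (k + m)%nat y -> Ms m y).
  { intros m k. induction k as [|k IH]; intros y hy; [exact hy|]. apply IH.
    exact (proj1 (proj2 (avoid_refine_all_spec _ _ _ (HMs (k + m)%nat))) y hy). }
  destruct (choice _ (fun m => proj1 (proj2 (HMs m)))) as [ys Hys].
  destruct (compact_cluster_point ys) as [v Hv].
  assert (Hvin : forall m, Ms m v).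
  { intros m. apply (cluster_point_closed (Ms m) ys v m); [apply HMs| |exact Hv].
    intros n hn. apply (Hdec m (n - m)%nat). now replace (n - m + m)%nat with n by lia. }
  exists v. split; [exact (Hvin 0%nat)|].
  intros e he. destruct (inv_INR_succ_lt (e / 2)) as [m Hm]; [lra|].
  destruct (Hnetf m v) as [c [hc hcv]].
  assert (Hgv : Ms (S m) (g v)) by now apply HMs.
  destruct (proj2 (proj2 (avoid_refine_all_spec (/ (INR m + 1)) (net m) (Ms m) (HMs m))) c hc)
    as [HA|HA].
  - specialize (HA v (Hvin (S m)) 0%nat). simpl in HA. lra.
  - specialize (HA (g v) Hgv). apply NNPP. intros Hn. apply HA. intros j.
    apply Rnot_lt_le. intros hj. apply Hn. exists (S j). split; [lia|].
    rewrite iter_succ_r. pose proof (dist_tri (iter g j (g v)) c v). rewrite dist_sym in hj. lra.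
Qed.

End Birkhoff.

Variable f : X -> X.
Hypothesis Hf : metric_continuous d f.

Definition regularly_recurrent (p : nat -> nat) (w : X) : Prop :=
  (forall k, (1 <= p k)%nat) /\ (forall k, Nat.divide (p k) (p (S k))) /\
  forall e, e > 0 -> exists k, forall i j, (i mod p k = j mod p k)%nat ->
    d (iter f i w) (iter f j w) < e.

Section Shadowing.
Hypothesis Hls : limit_shadowing d f.

Definition traces_cycles (b : X) (g e : R) : Prop :=
  forall (c : nat -> X) (L : nat), (1 <= L)%nat -> c 0%nat = b -> c L = b ->
    (forall i, (i < L)%nat -> d (f (c i)) (c (S i)) < e) ->
    exists z, forall i, (i <= L)%nat -> d (iter f i z) (c i) < g.

(* Concatenating pseudo-cycles through [b] with errors tending to 0 gives an
   asymptotic pseudo-orbit; its shadow traces one of the cycles. *)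
Lemma shrinking_cycles_traced b g (C : nat -> nat -> X) (L : nat -> nat) :
  g > 0 -> (forall n, (1 <= L n)%nat) -> (forall n, C n 0%nat = b) -> (forall n, C n (L n) = b) ->
  (forall n i, (i < L n)%nat -> d (f (C n i)) (C n (S i)) < / (INR n + 1)) ->
  exists n z, forall i, (i <= L n)%nat -> d (iter f i z) (C n i) < g.
Proof.
  intros hg HL H0 HLb Herr.
  assert (HC : forall n, C n (L n) = C (S n) 0%nat) by (intros n; now rewrite H0, HLb).
  set (xi := concat L C).
  assert (Hxi : forall t, d (f (xi t)) (xi (S t)) < / (INR (fst (block_pos L t)) + 1)).
  { intros t. destruct (block_pos L t) as [n i] eqn:Ht. unfold xi.
    rewrite (concat_succ L C HL HC t n i Ht). unfold concat. rewrite Ht.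
    apply Herr, (block_pos_lt L HL t n i Ht). }
  destruct (Hls xi) as [y Hy].
  { intros e he. destruct (inv_INR_succ_lt e he) as [N HN].
    destruct (block_pos_start L HL N) as [tN HtN]. exists tN. intros t ht.
    unfold R_dist. rewrite Rminus_0_r, Rabs_pos_eq by apply dist_ge0.
    eapply Rlt_le_trans; [apply Hxi|]. apply Rle_trans with (/ (INR N + 1)); [|lra].
    apply Rinv_le_contravar; [pose proof (pos_INR N); lra|].
    apply Rplus_le_compat_r, le_INR. pose proof (block_pos_mono L tN t ht) as h.
    now rewrite HtN in h. }
  destruct (Hy g hg) as [T HT].
  destruct (block_pos_start L HL T) as [t0 Ht0].
  assert (ht0 : (T <= t0)%nat) by (pose proof (block_pos_le L t0) as h; now rewrite Ht0 in h).
  exists T, (iter f t0 y). intros i hi.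
  specialize (HT (i + t0)%nat ltac:(lia)). unfold R_dist in HT.
  rewrite Rminus_0_r, Rabs_pos_eq in HT by apply dist_ge0.
  rewrite <- iter_add, dist_sym. unfold xi in HT.
  now rewrite (concat_block L C HL HC t0 T Ht0 i hi) in HT.
Qed.

Lemma traces_cycles_exists b g : g > 0 -> exists e, 0 < e <= g /\ traces_cycles b g e.
Proof.
  intros hg.
  enough (exists e, e > 0 /\ traces_cycles b g e) as [e [he HT]].
  { exists (Rmin e g). split; [split; [now apply Rmin_glb_lt | apply Rmin_r]|].
    intros c L h1 h2 h3 h4. apply HT; auto. intros i hi.
    eapply Rlt_le_trans; [apply h4, hi | apply Rmin_l]. }
  apply NNPP. intros Hn.
  assert (Hbad : forall n : nat, exists cL : (nat -> X) * nat,
     (1 <= snd cL)%nat /\ fst cL 0%nat = b /\ fst cL (snd cL) = b /\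
     (forall i, (i < snd cL)%nat -> d (f (fst cL i)) (fst cL (S i)) < / (INR n + 1)) /\
     forall z, exists i, (i <= snd cL)%nat /\ g <= d (iter f i z) (fst cL i)).
  { intros n. apply NNPP. intros H1. apply Hn. exists (/ (INR n + 1)). split.
    { apply Rinv_0_lt_compat. pose proof (pos_INR n). lra. }
    intros c L h1 h2 h3 h4. apply NNPP. intros H2. apply H1. exists (c, L). simpl.
    repeat split; auto. intros z. apply NNPP. intros H3. apply H2. exists z. intros i hi.
    apply Rnot_le_lt. intros H4. apply H3. now exists i. }
  destruct (choice _ Hbad) as [CL HCL].
  destruct (shrinking_cycles_traced b g (fun n => fst (CL n)) (fun n => snd (CL n)) hg)
    as [n [z Hz]]; try apply HCL.
  destruct (proj2 (proj2 (proj2 (proj2 (HCL n)))) z) as [i [hi Hi]].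
  specialize (Hz i hi). lra.
Qed.

Definition traces (P : nat -> X) (g : R) (z : X) : Prop := forall i, d (iter f i z) (P i) <= g.

Lemma iter_ball_closed i q g : closed_set (fun z => d (iter f i z) q <= g).
Proof.
  intros c Hc. apply Rle_plus_epsilon. intros e he.
  destruct (continuous_iter f Hf i c e he) as [t [ht Ht]].
  destruct (Hc t ht) as [z [Hz hz]]. specialize (Ht _ hz).
  pose proof (dist_tri (iter f i c) (iter f i z) q). lra.
Qed.

Lemma traces_closed P g : closed_set (traces P g).
Proof.
  intros c Hc i. apply iter_ball_closed. intros e he.
  destruct (Hc e he) as [z [Hz hz]]. exists z. auto.
Qed.

(* Compactness upgrades the tracing of the finite cycles [P 0 .. P (n p)] to
   tracing of the whole periodic pseudo-orbit. *)
Lemma traces_periodic_pseudo_orbit b g e (P : nat -> X) p :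
  traces_cycles b g e -> (1 <= p)%nat -> (forall i, P i = P (i mod p)%nat) -> P 0%nat = b ->
  (forall i, d (f (P i)) (P (S i)) < e) -> exists z, traces P g z.
Proof.
  intros HT hp HP h0 herr.
  assert (H : forall N : nat, exists z, forall i, (i <= S N * p)%nat -> d (iter f i z) (P i) < g).
  { intros N. apply HT; auto; [nia|]. now rewrite HP, Nat.Div0.mod_mul. }
  destruct (choice _ H) as [zs Hzs]. destruct (compact_cluster_point zs) as [c Hc].
  exists c. intros i. apply (cluster_point_closed _ zs c i (iter_ball_closed i (P i) g));
    [|exact Hc].
  intros N hN. apply Rlt_le, Hzs. nia.
Qed.

Definition closed_orbit (n : nat) (b z : X) (i : nat) : X :=
  if (i mod n =? 0)%nat then b else iter f (i mod n) z.

Lemma closed_orbit_mod n b z i : closed_orbit n b z i = closed_orbit n b z (i mod n).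
Proof. unfold closed_orbit. now rewrite Nat.Div0.mod_mod. Qed.

Lemma closed_orbit_0 n b z : closed_orbit n b z 0 = b.
Proof. unfold closed_orbit. now rewrite Nat.Div0.mod_0_l. Qed.

Lemma closed_orbit_diag n v i : closed_orbit n v v i = iter f (i mod n) v.
Proof.
  unfold closed_orbit. destruct (i mod n =? 0)%nat eqn:E; [|reflexivity].
  apply Nat.eqb_eq in E. now rewrite E.
Qed.

Lemma closed_orbit_step n b z i : (1 <= n)%nat ->
  d (f (closed_orbit n b z i)) (closed_orbit n b z (S i)) <= d (f b) (f z) + d (iter f n z) b.
Proof.
  intros hn. pose proof (dist_ge0 (f b) (f z)). pose proof (dist_ge0 (iter f n z) b).
  unfold closed_orbit. rewrite (succ_mod i n hn).
  destruct (S (i mod n) =? n)%nat eqn:E; cbn [Nat.eqb];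
    destruct (i mod n =? 0)%nat eqn:E0; try apply Nat.eqb_eq in E; try apply Nat.eqb_eq in E0.
  - replace n with 1%nat by lia. apply (dist_tri (f b) (f z) b).
  - rewrite <- iter_succ, E. lra.
  - rewrite E0. change (iter f 1 z) with (f z). lra.
  - rewrite <- iter_succ, dist_xx. lra.
Qed.

Record stage := Stage { st_orbit : nat -> X; st_period : nat; st_radius : R; st_error : R }.

Definition stage_ok (s : stage) : Prop :=
  (1 <= st_period s)%nat /\ (forall i, st_orbit s i = st_orbit s (i mod st_period s)%nat) /\
  0 < st_error s <= st_radius s /\ traces_cycles (st_orbit s 0%nat) (st_radius s) (st_error s) /\
  forall i, d (f (st_orbit s i)) (st_orbit s (S i)) < st_error s.

Definition stage_refines (s s' : stage) : Prop :=
  Nat.divide (st_period s) (st_period s') /\ st_radius s' = st_radius s / 2 /\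
  forall i, d (st_orbit s' i) (st_orbit s i) <= st_radius s.

Lemma stage_initial x g : nonwandering d f x -> g > 0 ->
  exists s, stage_ok s /\ st_orbit s 0%nat = x /\ st_radius s = g.
Proof.
  intros Hx hg. destruct (traces_cycles_exists x g hg) as [e [he HT]].
  destruct (Hf x (e / 2) ltac:(lra)) as [t [ht Ht]].
  assert (hr : Rmin t (e / 2) > 0) by (apply Rmin_glb_lt; lra).
  destruct (Hx _ (ball_open x (Rmin t (e / 2)))) as [n [hn [z [hz hnz]]]]; [now rewrite dist_xx|].
  pose proof (Rmin_l t (e / 2)). pose proof (Rmin_r t (e / 2)).
  exists (Stage (closed_orbit n x z) n g e). unfold stage_ok; simpl. rewrite closed_orbit_0.
  split; [|split; reflexivity].
  split; [lia|]. split; [apply closed_orbit_mod|]. split; [lra|]. split; [exact HT|].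
  intros i. eapply Rle_lt_trans; [apply closed_orbit_step; lia|].
  specialize (Ht z ltac:(lra)). rewrite (dist_sym (iter f n z)). lra.
Qed.

(* Trace the current pseudo-orbit, take a point [v] recurrent for [f^p] among the tracing
   points, and close up a piece of its orbit into the next, finer, pseudo-orbit. *)
Lemma stage_refinement s : stage_ok s -> exists s', stage_ok s' /\ stage_refines s s'.
Proof.
  destruct s as [P p g e]. intros [hp [HP [[he heg] [HT Herr]]]]. simpl in *.
  assert (HZ : closed_invariant (iter f p) (traces P g)).
  { split; [apply traces_closed|split].
    - now apply (traces_periodic_pseudo_orbit (P 0%nat) g e P p).
    - intros z hz i. rewrite <- iter_add, HP, <- Nat.Div0.mod_add with (b := 1%nat), <- HP.
      rewrite Nat.mul_1_l. apply hz. }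
  destruct (birkhoff_recurrence (iter f p) (continuous_iter f Hf p) _ HZ) as [v [Hv Hrec]].
  destruct (traces_cycles_exists v (g / 2) ltac:(lra)) as [e' [he' HT']].
  destruct (Hrec e' (proj1 he')) as [j [hj Hj]]. rewrite iter_mul in Hj.
  assert (hp' : (1 <= j * p)%nat) by nia.
  exists (Stage (closed_orbit (j * p) v v) (j * p) (g / 2) e').
  unfold stage_ok, stage_refines; simpl. rewrite closed_orbit_0.
  split; [split; [exact hp'|]; split; [apply closed_orbit_mod|]; split; [lra|];
          split; [exact HT'|]|].
  - intros i. eapply Rle_lt_trans; [apply closed_orbit_step, hp'|].
    rewrite dist_xx. lra.
  - split; [apply Nat.divide_factor_r|]. split; [reflexivity|]. intros i.
    rewrite closed_orbit_diag, HP, <- (mod_mod_divide i (j * p) p), <- HP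
      by apply Nat.divide_factor_r.
    apply Hv.
Qed.

Lemma stage_sequence s0 : stage_ok s0 -> exists sq : nat -> stage,
  sq 0%nat = s0 /\ forall k, stage_ok (sq k) /\ stage_refines (sq k) (sq (S k)).
Proof.
  intros H0.
  destruct (choice (fun s s' => stage_ok s -> stage_ok s' /\ stage_refines s s')) as [next Hnext].
  { intros s. destruct (classic (stage_ok s)) as [h|h].
    - destruct (stage_refinement s h) as [s' Hs']. now exists s'.
    - exists s. tauto. }
  assert (Hok : forall k, stage_ok (Nat.iter k next s0)).
  { induction k as [|k IH]; [exact H0|]. exact (proj1 (Hnext _ IH)). }
  exists (fun k => Nat.iter k next s0). split; [reflexivity|].
  intros k. split; [apply Hok | exact (proj2 (Hnext _ (Hok k)))].
Qed.

Section StageLimit.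
Variable sq : nat -> stage.
Hypothesis Hsq : forall k, stage_ok (sq k) /\ stage_refines (sq k) (sq (S k)).

Lemma stage_radius_small eta : eta > 0 -> exists k, st_radius (sq k) < eta.
Proof.
  intros heta.
  assert (Hr : forall k, st_radius (sq k) = st_radius (sq 0%nat) * (/ 2) ^ k).
  { induction k as [|k IH]; simpl; [lra|]. rewrite (proj1 (proj2 (proj2 (Hsq k)))), IH. lra. }
  assert (h0 : st_radius (sq 0%nat) > 0) by (destruct (Hsq 0%nat) as [[_ [_ [h _]]] _]; lra).
  destruct (pow_lt_1_zero (/ 2) ltac:(rewrite Rabs_pos_eq; lra) (eta / st_radius (sq 0%nat)))
    as [k Hk]; [now apply Rdiv_lt_0_compat|].
  exists k. specialize (Hk k (le_n k)). rewrite Rabs_pos_eq in Hk by (apply pow_le; lra).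
  rewrite Hr. apply Rmult_lt_compat_l with (r := st_radius (sq 0%nat)) in Hk; [|lra].
  now replace (st_radius (sq 0%nat) * (eta / st_radius (sq 0%nat))) with eta in Hk by (field; lra).
Qed.

Lemma stage_orbit_drift k j i :
  d (st_orbit (sq k) i) (st_orbit (sq (j + k)) i)
    <= 2 * st_radius (sq k) - 2 * st_radius (sq (j + k)).
Proof.
  induction j as [|j IH]; [simpl; rewrite dist_xx; lra|].
  simpl (S j + k)%nat. destruct (Hsq (j + k)%nat) as [_ [_ [hr hd]]].
  specialize (hd i). rewrite dist_sym in hd.
  pose proof (dist_tri (st_orbit (sq k) i) (st_orbit (sq (j + k)%nat) i)
                       (st_orbit (sq (S (j + k))) i)).
  lra.
Qed.

Lemma stage_orbit_limit :
  exists Q : nat -> X, forall i k, d (st_orbit (sq k) i) (Q i) <= 2 * st_radius (sq k).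
Proof.
  apply (choice (fun i c => forall k, d (st_orbit (sq k) i) c <= 2 * st_radius (sq k))).
  intros i. destruct (compact_cluster_point (fun k => st_orbit (sq k) i)) as [c Hc].
  exists c. intros k. apply Rle_plus_epsilon. intros eta heta.
  destruct (Hc eta heta k) as [n [hn hcn]].
  pose proof (stage_orbit_drift k (n - k) i) as Hdr. replace (n - k + k)%nat with n in Hdr by lia.
  pose proof (dist_tri (st_orbit (sq k) i) (st_orbit (sq n) i) c). rewrite dist_sym in hcn.
  destruct (Hsq n) as [[_ [_ [h _]]] _]. lra.
Qed.

Lemma stage_limit_orbit (Q : nat -> X) :
  (forall i k, d (st_orbit (sq k) i) (Q i) <= 2 * st_radius (sq k)) ->
  forall i, Q i = iter f i (Q 0%nat).
Proof.
  intros HQ. induction i as [|i IH]; [reflexivity|]. rewrite iter_succ, <- IH.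
  apply eq_of_dist_lt. intros eta heta.
  destruct (Hf (Q i) (eta / 2) ltac:(lra)) as [t [ht Ht]].
  destruct (stage_radius_small (Rmin (t / 2) (eta / 8))) as [k Hk]; [apply Rmin_glb_lt; lra|].
  pose proof (Rmin_l (t / 2) (eta / 8)). pose proof (Rmin_r (t / 2) (eta / 8)).
  destruct (Hsq k) as [[_ [_ [[_ heg] [_ Herr]]]] _].
  pose proof (HQ i k) as A1. pose proof (HQ (S i) k) as A2.
  set (P := st_orbit (sq k)) in *. specialize (Herr i).
  assert (A3 : d (f (Q i)) (f (P i)) < eta / 2) by (apply Ht; rewrite dist_sym; lra).
  rewrite dist_sym in A2, Herr, A3.
  pose proof (dist_tri (Q (S i)) (P (S i)) (f (P i))).
  pose proof (dist_tri (Q (S i)) (f (P i)) (f (Q i))).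
  lra.
Qed.

End StageLimit.

Lemma regularly_recurrent_near x eps : nonwandering d f x -> eps > 0 ->
  exists w p, d x w < eps /\ regularly_recurrent p w.
Proof.
  intros Hx heps.
  destruct (stage_initial x (eps / 4) Hx ltac:(lra)) as [s0 [Hs0 [Hx0 Hg0]]].
  destruct (stage_sequence s0 Hs0) as [sq [Hsq0 Hsq]].
  destruct (stage_orbit_limit sq Hsq) as [Q HQ].
  pose proof (stage_limit_orbit sq Hsq Q HQ) as HQi.
  exists (Q 0%nat), (fun k => st_period (sq k)). split; [|split; [|split]].
  - pose proof (HQ 0%nat 0%nat) as H0. rewrite Hsq0, Hx0, Hg0 in H0. lra.
  - intros k. apply Hsq.
  - intros k. apply Hsq.
  - intros e he. destruct (stage_radius_small sq Hsq (e / 4)) as [k Hk]; [lra|].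
    exists k. intros i j hij. rewrite <- !HQi.
    destruct (Hsq k) as [[_ [HP _]] _].
    assert (Pij : st_orbit (sq k) i = st_orbit (sq k) j) by now rewrite HP, hij, <- HP.
    pose proof (HQ i k) as Hi. pose proof (HQ j k) as Hj. rewrite Pij, dist_sym in Hi.
    pose proof (dist_tri (Q i) (st_orbit (sq k) j) (Q j)). lra.
Qed.

End Shadowing.

Section RegularRecurrence.
Variables (w : X) (p : nat -> nat).
Hypothesis Hw : regularly_recurrent p w.

Lemma period_pos k : (1 <= p k)%nat.
Proof. apply Hw. Qed.

Lemma mod_eq_period_le k m i j : (k <= m)%nat ->
  (i mod p m = j mod p m)%nat -> (i mod p k = j mod p k)%nat.
Proof.
  intros h H. now rewrite <- (mod_mod_divide i (p m) (p k)), <- (mod_mod_divide j (p m) (p k)), H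
    by (apply divide_chain_le; [apply Hw | exact h]).
Qed.

Lemma regularly_recurrent_nonwandering : nonwandering d f w.
Proof.
  intros U HU Uw. destruct (HU w Uw) as [r [hr Hr]].
  destruct (proj2 (proj2 Hw) r hr) as [k Hk].
  exists (p k). split; [apply period_pos|]. exists w. split; [exact Uw|]. apply Hr.
  apply (Hk 0%nat (p k)). now rewrite Nat.Div0.mod_0_l, Nat.Div0.mod_same.
Qed.

Definition class_closure (k r : nat) (z : X) : Prop :=
  forall e, e > 0 -> exists i, (i mod p k = r mod p k)%nat /\ d z (iter f i w) < e.

Lemma class_closure_orbit k i r : (i mod p k = r mod p k)%nat -> class_closure k r (iter f i w).
Proof. intros H e he. exists i. split; [exact H|]. now rewrite dist_xx. Qed.

Lemma class_closure_congr k r s z :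
  (r mod p k = s mod p k)%nat -> class_closure k r z -> class_closure k s z.
Proof.
  intros H Hz e he. destruct (Hz e he) as [i [h1 h2]]. exists i. split; [congruence|exact h2].
Qed.

Lemma class_closure_iter k r t z : class_closure k r z -> class_closure k (r + t) (iter f t z).
Proof.
  intros Hz e he. destruct (continuous_iter f Hf t z e he) as [t' [ht' Ht']].
  destruct (Hz t' ht') as [i [h1 h2]]. exists (t + i)%nat. split.
  - rewrite Nat.add_comm, Nat.Div0.add_mod, h1, <- Nat.Div0.add_mod. reflexivity.
  - rewrite iter_add. now apply Ht'.
Qed.

Lemma class_closure_le k m r z : (k <= m)%nat -> class_closure m r z -> class_closure k r z.
Proof.
  intros h Hz e he. destruct (Hz e he) as [i [h1 h2]]. exists i.
  split; [now apply (mod_eq_period_le k m) | exact h2].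
Qed.

Lemma class_closure_closed k r : closed_set (class_closure k r).
Proof.
  intros z H e he. destruct (H (e / 2) ltac:(lra)) as [u [Hu hu]].
  destruct (Hu (e / 2) ltac:(lra)) as [i [h1 h2]]. exists i. split; [exact h1|].
  pose proof (dist_tri z u (iter f i w)). lra.
Qed.

Lemma class_closure_small e : e > 0 -> exists K, forall k r z u, (K <= k)%nat ->
  class_closure k r z -> class_closure k r u -> d z u <= e.
Proof.
  intros he. destruct (proj2 (proj2 Hw) e he) as [K HK]. exists K.
  intros k r z u hk Hz Hu. apply Rle_plus_epsilon. intros eta heta.
  destruct (Hz (eta / 2) ltac:(lra)) as [i [hi1 hi2]].
  destruct (Hu (eta / 2) ltac:(lra)) as [j [hj1 hj2]].
  assert (Hij : d (iter f i w) (iter f j w) < e).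
  { apply HK, (mod_eq_period_le K k); [exact hk | congruence]. }
  pose proof (dist_tri z (iter f i w) u). pose proof (dist_tri (iter f i w) (iter f j w) u).
  rewrite (dist_sym (iter f j w) u) in *. lra.
Qed.

(* Closures of residue classes mod [p k] are equal or disjoint.  With [c] near [f^b' w] and
   [f^a w] ([b' = s], [a = r] mod [p k]) and [u] near [f^b w] ([b = s]), pick [n < p m] with
   [n + b' = b mod p m]; then [p k | n], and [f^(n+a) w] is near [f^n c], hence near
   [f^(n+b') w], hence (regularity at level [m]) near [f^b w] and [u]. *)
Lemma class_closure_absorb k r s c u :
  class_closure k r c -> class_closure k s c -> class_closure k s u -> class_closure k r u.
Proof.
  intros Hr Hs Hu e he.
  destruct (proj2 (proj2 Hw) (e / 4) ltac:(lra)) as [m0 Hm0].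
  set (m := Nat.max k m0). pose proof (period_pos m) as hpm.
  destruct (uniform_radius (fun n t => forall y, d c y < t -> d (iter f n c) (iter f n y) < e / 4)
                          (p m)) as [t [ht Ht]].
  { intros n t t' h H y hy. apply H. lra. }
  { intros n _. destruct (continuous_iter f Hf n c (e / 4) ltac:(lra)) as [t [ht Ht]]. eauto. }
  destruct (Hu (e / 4) ltac:(lra)) as [b [hb hub]].
  destruct (Hs t ht) as [b' [hb' hcb']].
  destruct (Hr t ht) as [a [ha hca]].
  set (n := ((b + (p m - 1) * b') mod p m)%nat).
  assert (hn : (n < p m)%nat) by (apply Nat.mod_upper_bound; lia).
  assert (Hnb : ((n + b') mod p m = b mod p m)%nat).
  { unfold n. rewrite Nat.Div0.add_mod_idemp_l.
    replace (b + (p m - 1) * b' + b')%nat with (b + b' * p m)%nat by nia.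
    apply Nat.Div0.mod_add. }
  assert (Hn0 : (n mod p k = 0)%nat).
  { apply Nat.Lcm0.mod_divide. replace n with (n + b' - b')%nat by lia.
    apply (divide_sub_iff_mod_eq (p k) b' (n + b')); [apply period_pos | lia |].
    rewrite (mod_eq_period_le k m _ _ (Nat.le_max_l k m0) Hnb). congruence. }
  exists (n + a)%nat. split.
  - now rewrite Nat.Div0.add_mod, Hn0, Nat.add_0_l, Nat.Div0.mod_mod.
  - pose proof (Ht n hn _ hcb') as E1. pose proof (Ht n hn _ hca) as E2.
    rewrite <- !iter_add in E1, E2.
    pose proof (Hm0 _ _ (mod_eq_period_le m0 m _ _ (Nat.le_max_r k m0) Hnb)) as E3.
    pose proof (dist_tri u (iter f b w) (iter f (n + a) w)).
    pose proof (dist_tri (iter f b w) (iter f (n + b') w) (iter f (n + a) w)).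
    pose proof (dist_tri (iter f (n + b') w) (iter f n c) (iter f (n + a) w)).
    rewrite dist_sym in E3, E1. lra.
Qed.

Definition classes_meet (k r s : nat) : Prop :=
  exists c, class_closure k r c /\ class_closure k s c.

Lemma classes_meet_sym k r s : classes_meet k r s -> classes_meet k s r.
Proof. intros [c [h1 h2]]. now exists c. Qed.

Lemma classes_meet_closure k r s u :
  classes_meet k r s -> class_closure k s u -> class_closure k r u.
Proof. intros [c [h1 h2]] H. eapply class_closure_absorb; eauto. Qed.

Lemma classes_meet_trans k r s t : classes_meet k r s -> classes_meet k s t -> classes_meet k r t.
Proof. intros H1 [c [h1 h2]]. exists c. split; [eapply classes_meet_closure; eauto | exact h2]. Qed.

Lemma classes_meet_shift k r s t : classes_meet k r s -> classes_meet k (r + t) (s + t).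
Proof. intros [c [h1 h2]]. exists (iter f t c). split; now apply class_closure_iter. Qed.

Lemma classes_meet_unshift k r s t : classes_meet k (r + t) (s + t) -> classes_meet k r s.
Proof.
  intros H. pose proof (period_pos k).
  destruct (classes_meet_shift k _ _ (p k * t - t) H) as [c [h1 h2]]. exists c.
  split; eapply class_closure_congr; [| exact h1 | | exact h2].
  - replace (r + t + (p k * t - t))%nat with (r + t * p k)%nat by nia. apply Nat.Div0.mod_add.
  - replace (s + t + (p k * t - t))%nat with (s + t * p k)%nat by nia. apply Nat.Div0.mod_add.
Qed.

Lemma classes_meet_period k :
  exists D, (1 <= D)%nat /\ forall r s, classes_meet k r s <-> (r mod D = s mod D)%nat.
Proof.
  destruct (additive_set_multiples (classes_meet k 0)) as [D [hD HD]].
  - intros t u Ht Hu. apply (classes_meet_trans k 0 t); [exact Ht|].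
    rewrite Nat.add_comm. exact (classes_meet_shift k 0 u t Hu).
  - intros t u Ht Htu. apply (classes_meet_unshift k 0 u t).
    rewrite Nat.add_0_l, (Nat.add_comm u t).
    exact (classes_meet_trans k t 0 _ (classes_meet_sym k 0 t Ht) Htu).
  - exists (p k). split; [apply period_pos|]. exists w. split; apply (class_closure_orbit k 0).
    + reflexivity.
    + now rewrite Nat.Div0.mod_0_l, Nat.Div0.mod_same.
  - exists D. split; [exact hD|].
    assert (H : forall r s, (r <= s)%nat -> classes_meet k r s <-> (r mod D = s mod D)%nat).
    { intros r s hrs. rewrite <- divide_sub_iff_mod_eq, <- HD by assumption.
      split; intros H.
      - apply (classes_meet_unshift k 0 (s - r) r). now replace (s - r + r)%nat with s by lia.
      - apply (classes_meet_shift k 0 (s - r) r) in H.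
        now replace (s - r + r)%nat with s in H by lia. }
    intros r s. destruct (Nat.le_gt_cases r s) as [h|h]; [now apply H|].
    split; intros H1.
    + symmetry. apply H; [lia|]. now apply classes_meet_sym.
    + apply classes_meet_sym, H; [lia|]. now symmetry.
Qed.

Lemma orbit_closure_step z : orbit_closure d f w z -> orbit_closure d f w (f z).
Proof.
  intros Hz e he. destruct (Hf z e he) as [t [ht Ht]]. destruct (Hz t ht) as [n hn].
  exists (S n). now apply Ht.
Qed.

Lemma orbit_closure_class k z : orbit_closure d f w z -> exists r, class_closure k r z.
Proof.
  intros Hz. apply NNPP. intros Hn.
  destruct (uniform_radius (fun r t => forall u, class_closure k r u -> t <= d z u) (p k))
    as [t [ht Ht]].
  { intros r t t' h H u hu. specialize (H u hu). lra. }
  { intros r _. apply closed_set_apart; [apply class_closure_closed|]. intros h. apply Hn. eauto. }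
  destruct (Hz t ht) as [n hn]. pose proof (period_pos k).
  assert (Hcl : class_closure k (n mod p k) (iter f n w))
    by (apply class_closure_orbit; symmetry; apply Nat.Div0.mod_mod).
  specialize (Ht _ (Nat.mod_upper_bound n (p k) ltac:(lia)) _ Hcl). lra.
Qed.

Lemma class_closure_isolated k r z : class_closure k r z ->
  exists t, t > 0 /\ forall u, orbit_closure d f w u -> d z u < t -> class_closure k r u.
Proof.
  intros Hz.
  destruct (uniform_radius
              (fun s t => ~ classes_meet k r s -> forall u, class_closure k s u -> t <= d z u)
              (p k))
    as [t [ht Ht]].
  { intros s t t' h H hn u hu. specialize (H hn u hu). lra. }
  { intros s _. destruct (classic (classes_meet k r s)) as [hr|hr].
    - exists 1. split; [lra | contradiction].
    - destruct (closed_set_apart (class_closure k s) z (class_closure_closed k s)) as [t [ht Ht]].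
      + intros h. apply hr. now exists z.
      + exists t. auto. }
  exists t. split; [exact ht|]. intros u Hu hzu.
  destruct (orbit_closure_class k u Hu) as [s Hs]. pose proof (period_pos k).
  apply (class_closure_congr k s (s mod p k)) in Hs; [|symmetry; apply Nat.Div0.mod_mod].
  destruct (classic (classes_meet k r (s mod p k))) as [hr|hr].
  - now apply (classes_meet_closure k r (s mod p k)).
  - specialize (Ht _ (Nat.mod_upper_bound s (p k) ltac:(lia)) hr u Hs). lra.
Qed.

Section ClassPeriod.
Variable D : nat -> nat.
Hypothesis HD : forall k,
  (1 <= D k)%nat /\ forall r s, classes_meet k r s <-> (r mod D k = s mod D k)%nat.

Lemma class_period_divide k m : (k <= m)%nat -> Nat.divide (D k) (D m).
Proof.
  intros h. apply Nat.Lcm0.mod_divide.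
  assert (Hm : classes_meet m 0 (D m))
    by (apply HD; now rewrite Nat.Div0.mod_0_l, Nat.Div0.mod_same).
  destruct Hm as [c [h0 h1]].
  assert (Hk : classes_meet k 0 (D m)) by (exists c; split; eapply class_closure_le; eauto).
  apply HD in Hk. now rewrite Nat.Div0.mod_0_l in Hk.
Qed.

Lemma bounded_class_period_periodic : (exists B, forall k, (D k <= B)%nat) -> periodic f w.
Proof.
  intros [B HB]. exists (fact B). split; [apply lt_O_fact|].
  symmetry. apply eq_of_dist_lt. intros e he.
  destruct (class_closure_small (e / 2) ltac:(lra)) as [K HK].
  assert (Hmeet : classes_meet K (fact B) 0).
  { apply HD. rewrite Nat.Div0.mod_0_l. apply Nat.Lcm0.mod_divide, divide_fact.
    split; [apply HD | apply HB]. }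
  assert (Hw0 : class_closure K (fact B) w)
    by exact (classes_meet_closure K (fact B) 0 w Hmeet (class_closure_orbit K 0 0 eq_refl)).
  pose proof (HK K _ _ _ (le_n K) Hw0 (class_closure_orbit K (fact B) (fact B) eq_refl)). lra.
Qed.

Section Odometer.
Variable kk : nat -> nat.
Hypothesis Hkk0 : (1 < D (kk 0%nat))%nat.
Hypothesis Hkk : forall j, (kk j < kk (S j))%nat /\ (D (kk j) < D (kk (S j)))%nat.

Lemma subseq_ge j : (j <= kk j)%nat.
Proof. induction j as [|j IH]; [lia|]. pose proof (proj1 (Hkk j)). lia. Qed.

Lemma odometer_seq_class_period : odometer_seq (fun j => D (kk j)).
Proof.
  split; [exact Hkk0|]. intros j. split; [apply Hkk|].
  apply class_period_divide. pose proof (proj1 (Hkk j)). lia.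
Qed.

Variable code : X -> nat -> nat.
Hypothesis Hcode : forall z j, orbit_closure d f w z -> class_closure (kk j) (code z j) z.

Definition odometer_code (z : X) (j : nat) : nat := (code z j mod D (kk j))%nat.

Lemma odometer_code_spec z j r : orbit_closure d f w z -> class_closure (kk j) r z ->
  odometer_code z j = (r mod D (kk j))%nat.
Proof. intros Hz Hr. apply HD. exists z. split; [apply Hcode, Hz | exact Hr]. Qed.

Lemma odometer_code_class u j r : orbit_closure d f w u ->
  odometer_code u j = (r mod D (kk j))%nat -> class_closure (kk j) r u.
Proof.
  intros Hu Heq. apply (classes_meet_closure _ r (code u j)); [|apply Hcode, Hu].
  apply HD. unfold odometer_code in Heq. now rewrite Heq.
Qed.

Lemma odometer_code_in z :
  orbit_closure d f w z -> in_odometer (fun j => D (kk j)) (odometer_code z).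
Proof.
  intros Hz j. split.
  - apply Nat.mod_upper_bound. pose proof (proj1 (HD (kk j))). lia.
  - assert (Hj : class_closure (kk j) (code z (S j)) z).
    { apply (class_closure_le _ (kk (S j))); [pose proof (proj1 (Hkk j)); lia | apply Hcode, Hz]. }
    rewrite (odometer_code_spec z j _ Hz Hj). apply mod_mod_divide, odometer_seq_class_period.
Qed.

Lemma odometer_code_onto q : in_odometer (fun j => D (kk j)) q ->
  exists z, orbit_closure d f w z /\ forall j, odometer_code z j = q j.
Proof.
  intros Hq.
  pose proof (in_odometer_mod _ q (fun j => proj2 (proj2 odometer_seq_class_period j)) Hq) as Hmod.
  assert (Hcl : forall j l, (j <= l)%nat -> class_closure (kk j) (q j) (iter f (q l) w)).
  { intros j l hjl. apply (classes_meet_closure _ (q j) (q l)); [|now apply class_closure_orbit].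
    apply HD. rewrite (Hmod j l hjl). apply Nat.mod_small, Hq. }
  destruct (compact_cluster_point (fun l => iter f (q l) w)) as [c Hc].
  assert (HKc : orbit_closure d f w c).
  { intros e he. destruct (Hc e he 0%nat) as [n [_ hn]]. now exists (q n). }
  exists c. split; [exact HKc|]. intros j.
  rewrite (odometer_code_spec c j (q j) HKc); [apply Nat.mod_small, Hq|].
  apply (cluster_point_closed _ (fun l => iter f (q l) w) c j (class_closure_closed _ _));
    [|exact Hc].
  intros l. apply Hcl.
Qed.

Lemma odometer_code_close e : e > 0 -> exists N, forall z u,
  orbit_closure d f w z -> orbit_closure d f w u ->
  odometer_code z N = odometer_code u N -> d z u <= e.
Proof.
  intros he. destruct (class_closure_small e he) as [K HK]. exists K.
  intros z u Hz Hu Heq. apply (HK (kk K) (code z K)); [apply subseq_ge | apply Hcode, Hz |].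
  apply odometer_code_class; [exact Hu | now rewrite <- Heq].
Qed.

Lemma odometer_code_locally_constant z N : orbit_closure d f w z -> exists t, t > 0 /\
  forall u, orbit_closure d f w u -> d z u < t ->
    forall j, (j < N)%nat -> odometer_code u j = odometer_code z j.
Proof.
  intros Hz.
  destruct (uniform_radius (fun j t => forall u, orbit_closure d f w u -> d z u < t ->
                              odometer_code u j = odometer_code z j) N) as [t [ht Ht]].
  { intros j t t' h H u hu hd. apply H; [exact hu | lra]. }
  { intros j _. destruct (class_closure_isolated (kk j) (code z j) z (Hcode z j Hz)) as [t [ht Ht]].
    exists t. split; [exact ht|]. intros u Hu hd. now apply odometer_code_spec, Ht. }
  exists t. split; [exact ht|]. intros u Hu hd j hj. now apply Ht.
Qed.

Lemma odometer_code_shift z j : orbit_closure d f w z ->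
  odometer_code (f z) j = odometer_map (fun j => D (kk j)) (odometer_code z) j.
Proof.
  intros Hz. unfold odometer_map, odometer_code at 2. rewrite Nat.Div0.add_mod_idemp_l.
  apply odometer_code_spec; [now apply orbit_closure_step|].
  apply (class_closure_iter _ _ 1), Hcode, Hz.
Qed.

Lemma odometer_conjugacy : conj_to_odometer d f w (fun j => D (kk j)).
Proof.
  unfold conj_to_odometer; cbv zeta.
  exists odometer_code. split; [exact odometer_code_in|]. split; [exact odometer_code_onto|].
  split; [|split; [exact odometer_code_locally_constant|split]].
  - intros z u Hz Hu Heq. apply eq_of_dist_lt. intros e he.
    destruct (odometer_code_close (e / 2) ltac:(lra)) as [N HN].
    specialize (HN z u Hz Hu (Heq N)). lra.
  - intros z e Hz he. destruct (odometer_code_close (e / 2) ltac:(lra)) as [N HN].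
    exists (S N). intros u Hu Heq.
    specialize (HN z u Hz Hu (eq_sym (Heq N (Nat.lt_succ_diag_r N)))). lra.
  - intros z Hz j. now apply odometer_code_shift.
Qed.

End Odometer.
End ClassPeriod.

Lemma regularly_recurrent_classification :
  periodic f w \/ exists m, odometer_seq m /\ conj_to_odometer d f w m.
Proof.
  destruct (choice _ classes_meet_period) as [D HD].
  destruct (classic (exists B, forall k, (D k <= B)%nat)) as [Hb|Hb];
    [left; exact (bounded_class_period_periodic D HD Hb) | right].
  destruct (unbounded_monotone_subseq D) as [kk [Hkk0 Hkk]].
  - intros k l h. apply Nat.divide_pos_le; [apply HD | now apply class_period_divide].
  - intros B. apply NNPP. intros H. apply Hb. exists B. intros k.
    apply Nat.nlt_ge. intros h. apply H. now exists k.
  - destruct (choice (fun (zj : X * nat) r =>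
                        orbit_closure d f w (fst zj) -> class_closure (kk (snd zj)) r (fst zj)))
      as [code Hcode].
    { intros [z j]. destruct (classic (orbit_closure d f w z)) as [Hz|Hz].
      - destruct (orbit_closure_class (kk j) z Hz) as [r Hr]. now exists r.
      - exists 0%nat. tauto. }
    exists (fun j => D (kk j)). split; [exact (odometer_seq_class_period D HD kk Hkk0 Hkk)|].
    apply (odometer_conjugacy D HD kk Hkk0 Hkk (fun z j => code (z, j))).
    intros z j. exact (Hcode (z, j)).
Qed.

End RegularRecurrence.
End MetricDynamics.

Theorem corollary1p1 (X : Type) (d : X -> X -> R) (f : X -> X)
  (Hd : is_metric d) (HX : metric_compact d) (Hf : metric_continuous d f)
  (Hls : limit_shadowing d f) :
  forall x, nonwandering d f x ->
  forall eps, eps > 0 ->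
  exists y, nonwandering d f y /\ d x y < eps /\
    (periodic f y \/
     exists m : nat -> nat, odometer_seq m /\ conj_to_odometer d f y m).
Proof.
  intros x Hx eps heps.
  destruct (regularly_recurrent_near d Hd HX f Hf Hls x eps Hx heps) as [w [p [hxw Hw]]].
  exists w. split; [|split; [exact hxw|]].
  - exact (regularly_recurrent_nonwandering d f w p Hw).
  - exact (regularly_recurrent_classification d Hd HX f Hf w p Hw).
Qed.
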